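(* Let $s\ge 3$ be an integer. Then $$T_s=B_0\cup B_1\cup\cdots\cup B_{\lfloor s/2\rfloor-1},\qquad B_k=\{1+k(s+2),\,2+k(s+2),\,\ldots,\,(k+1)s-1\},$$ and $T_s$ is a graded poset of length $\lfloor s/2\rfloor-1$ whose elements of rank $k$ are exactly those of $B_k$. Moreover, for $1\le k\le\lfloor s/2\rfloor-1$, each element $b\in B_k$ covers exactly the three elements $b-s,\ b-(s+1),\ b-(s+2)$, all of which lie in $B_{k-1}$ (and the elements of $B_0$ are exactly the minimal elements).
   Context: For a positive integer $s$, $T_s=P_{(s,s+1,s+2)}$ denotes the set of positive integers that cannot be written as $k_1s+k_2(s+1)+k_3(s+2)$ with $k_1,k_2,k_3$ nonnegative integers, partially ordered by: $y\ge x$ iff there exist $y=y_0,y_1,\ldots,y_l=x$, all in $T_s$, with $y_i-y_{i+1}\in\{s,s+1,s+2\}$ for all $i$. For a poset, $y$ covers $x$ if $x<y$ and there is no $z$ with $x<z<y$. *)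

From Stdlib Require Import Arith Lia.

Definition repr (s n : nat) : Prop :=
  exists k1 k2 k3 : nat, n = k1 * s + k2 * (s + 1) + k3 * (s + 2).

Definition inT (s n : nat) : Prop := 0 < n /\ ~ repr s n.

Definition step (s y x : nat) : Prop :=
  y = x + s \/ y = x + (s + 1) \/ y = x + (s + 2).

Inductive geT (s : nat) : nat -> nat -> Prop :=
| geT_refl : forall y, inT s y -> geT s y y
| geT_step : forall y z x, inT s y -> step s y z -> geT s z x -> geT s y x.

Definition gtT (s y x : nat) : Prop := geT s y x /\ y <> x.

Definition coversT (s y x : nat) : Prop :=
  gtT s y x /\ ~ (exists z, gtT s y z /\ gtT s z x).

Definition minimalT (s x : nat) : Prop :=
  inT s x /\ ~ (exists y, gtT s x y).

Definition graded_with_rank (s : nat) (rho : nat -> nat) : Prop :=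
  (forall x, minimalT s x -> rho x = 0) /\
  (forall x y, coversT s y x -> rho y = rho x + 1).

Definition chainT (s l : nat) (f : nat -> nat) : Prop :=
  (forall i, i <= l -> inT s (f i)) /\
  (forall i, i < l -> gtT s (f (S i)) (f i)).

Definition has_length (s L : nat) : Prop :=
  (exists f, chainT s L f) /\ (forall l f, chainT s l f -> l <= L).

Definition inB (s k b : nat) : Prop :=
  1 + k * (s + 2) <= b /\ b <= (k + 1) * s - 1.

(* A number is a sum of m terms from {s, s+1, s+2} exactly when it lies in
   [m s, m (s+2)], so the gaps are the blocks B_k = (k(s+2), (k+1)s) and
   b / s is the block index of b.  A step of size s, s+1 or s+2 between two
   gaps always moves to the next block, hence the order relation is graded by
   b / s, every step is a covering relation, and every covering relation is a
   single step. *)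

From Stdlib Require Import Arith Lia.

Lemma repr_iff_interval (s n : nat) :
  repr s n <-> exists m, m * s <= n <= m * (s + 2).
Proof.
  split.
  - intros [k1 [k2 [k3 ->]]]. exists (k1 + k2 + k3). nia.
  - intros [m [Hlo Hhi]].
    set (r := n - m * s).
    destruct (le_lt_dec r m) as [Hr | Hr].
    + exists (m - r), r, 0. nia.
    + exists 0, (2 * m - r), (r - m). nia.
Qed.

Section Gaps.

Variable s : nat.
Hypothesis s_pos : 0 < s.

Lemma inB_rank (k b : nat) : inB s k b -> b / s = k.
Proof.
  intros [Hlo Hhi]. symmetry. apply Nat.div_unique with (r := b - k * s); nia.
Qed.

Lemma inB_index_le (k b : nat) : inB s k b -> k <= s / 2 - 1.
Proof.
  intros [Hlo Hhi].
  pose proof (Nat.div_mod_eq s 2). pose proof (Nat.mod_upper_bound s 2 ltac:(lia)).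
  nia.
Qed.

Lemma inT_iff_inB (n : nat) : inT s n <-> exists k, inB s k n.
Proof.
  split.
  - intros [Hn Hnrepr].
    pose proof (Nat.div_mod_eq n s). pose proof (Nat.mod_upper_bound n s ltac:(lia)).
    assert (Hout : ~ (n / s * s <= n <= n / s * (s + 2)))
      by (intro; apply Hnrepr, repr_iff_interval; eauto).
    exists (n / s). unfold inB. nia.
  - intros [k [Hlo Hhi]]. split; [lia |].
    intros [m [Hmlo Hmhi]]%repr_iff_interval.
    destruct (le_lt_dec m k) as [Hmk | Hkm].
    + assert (m * (s + 2) <= k * (s + 2)) by (apply Nat.mul_le_mono_r; lia). lia.
    + assert ((k + 1) * s <= m * s) by (apply Nat.mul_le_mono_r; lia). lia.
Qed.

Lemma inT_rank (n : nat) : inT s n -> inB s (n / s) n.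
Proof.
  intros [k Hk]%inT_iff_inB. now rewrite (inB_rank k n Hk).
Qed.

Lemma step_rank (y z : nat) :
  inT s y -> inT s z -> step s y z -> y / s = z / s + 1.
Proof.
  intros Hy%inT_rank Hz%inT_rank Hstep.
  set (k := y / s) in Hy |- *. set (k' := z / s) in Hz |- *.
  destruct Hy as [Hylo Hyhi], Hz as [Hzlo Hzhi].
  destruct (lt_eq_lt_dec (k' + 1) k) as [[Hlt | Heq] | Hgt]; [| lia |].
  - assert ((k' + 2) * (s + 2) <= k * (s + 2)) by (apply Nat.mul_le_mono_r; lia).
    unfold step in Hstep. nia.
  - assert (k * (s + 2) <= k' * (s + 2)) by (apply Nat.mul_le_mono_r; lia).
    assert (k * s <= k' * s) by (apply Nat.mul_le_mono_r; lia).
    unfold step in Hstep. nia.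
Qed.

Lemma geT_inT (y x : nat) : geT s y x -> inT s y /\ inT s x.
Proof.
  induction 1 as [y Hy | y z x Hy Hstep Hzx IH]; tauto.
Qed.

Lemma geT_rank (y x : nat) : geT s y x -> x / s <= y / s /\ (y / s = x / s -> y = x).
Proof.
  induction 1 as [y Hy | y z x Hy Hstep Hzx IH]; [lia |].
  pose proof (step_rank y z Hy (proj1 (geT_inT z x Hzx)) Hstep). lia.
Qed.

Lemma gtT_rank (y x : nat) : gtT s y x -> x / s < y / s.
Proof.
  intros [Hyx Hne]. destruct (geT_rank y x Hyx) as [Hle Heq].
  destruct (Nat.eq_dec (y / s) (x / s)); [exfalso; auto | lia].
Qed.

Lemma step_gtT (y x : nat) : inT s y -> inT s x -> step s y x -> gtT s y x.
Proof.
  intros Hy Hx Hstep. split.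
  - apply geT_step with x; auto using geT_refl.
  - unfold step in Hstep. lia.
Qed.

Lemma coversT_step (y x : nat) : coversT s y x -> step s y x.
Proof.
  intros [[Hyx Hne] Hnomid]. destruct Hyx as [y Hy | y z x Hy Hstep Hzx]; [easy |].
  destruct (Nat.eq_dec z x) as [-> | Hzx_ne]; [easy |].
  exfalso. apply Hnomid. exists z.
  split; [| now split].
  apply step_gtT; [| apply (geT_inT z x) |]; auto.
Qed.

Lemma step_coversT (y x : nat) : inT s y -> inT s x -> step s y x -> coversT s y x.
Proof.
  intros Hy Hx Hstep. split; [now apply step_gtT |].
  intros [z [Hyz Hzx]].
  pose proof (gtT_rank y z Hyz). pose proof (gtT_rank z x Hzx).
  pose proof (step_rank y x Hy Hx Hstep). lia.
Qed.

Lemma inB_sub_step (k b d : nat) :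
  1 <= k -> inB s k b -> s <= d <= s + 2 -> inB s (k - 1) (b - d) /\ step s b (b - d).
Proof.
  intros Hk [Hlo Hhi] Hd. destruct k as [| k]; [lia |].
  replace (S k - 1) with k by lia. unfold inB, step. nia.
Qed.

Lemma coversT_iff (k b x : nat) : 1 <= k -> inB s k b ->
  coversT s b x <-> x = b - s \/ x = b - (s + 1) \/ x = b - (s + 2).
Proof.
  intros Hk Hb. split.
  - intros Hcov%coversT_step. unfold step in Hcov. lia.
  - assert (b >= s + 3) by (destruct Hb; nia).
    assert (Hb_T : inT s b) by (apply inT_iff_inB; eauto).
    intros Hx. destruct (inB_sub_step k b (b - x) Hk Hb) as [Hx_B Hstep];
      [lia |].
    replace (b - (b - x)) with x in * by lia.
    apply step_coversT; [| apply inT_iff_inB; eauto |]; auto.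
Qed.

Lemma minimalT_iff_inB0 (x : nat) : minimalT s x <-> inB s 0 x.
Proof.
  split.
  - intros [Hx Hnolow]. apply inT_rank in Hx.
    destruct (x / s) as [| k] eqn:Hrank; [easy |].
    exfalso. apply Hnolow. exists (x - s).
    destruct (inB_sub_step (S k) x s ltac:(lia) Hx ltac:(lia)) as [Hlow Hstep].
    apply step_gtT; [apply inT_iff_inB; eauto | apply inT_iff_inB; eauto | exact Hstep].
  - intros Hx. split; [apply inT_iff_inB; eauto |].
    intros [y [Hxy Hne]]. destruct Hxy as [x Hx' | x z y Hx' Hstep Hzy]; [easy |].
    pose proof (geT_inT z y Hzy) as [[Hz _] _].
    destruct Hx. unfold step in Hstep. lia.
Qed.

Lemma chainT_rank (l : nat) (f : nat -> nat) :
  chainT s l f -> forall i, i <= l -> i <= f i / s.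
Proof.
  intros [_ Hgt]. induction i as [| i IH]; intros Hi; [lia |].
  pose proof (gtT_rank _ _ (Hgt i ltac:(lia))). specialize (IH ltac:(lia)). lia.
Qed.

Lemma inB_lowest (k : nat) : 2 <= s -> k <= s / 2 - 1 -> inB s k (1 + k * (s + 2)).
Proof.
  intros Hs Hk.
  pose proof (Nat.div_mod_eq s 2). pose proof (Nat.mod_upper_bound s 2 ltac:(lia)).
  unfold inB. nia.
Qed.

Lemma has_length_gaps : 2 <= s -> has_length s (s / 2 - 1).
Proof.
  intros Hs. split.
  - exists (fun i => 1 + i * (s + 2)). split.
    + intros i Hi. apply inT_iff_inB. exists i. now apply inB_lowest.
    + intros i Hi. apply step_gtT.
      * apply inT_iff_inB. exists (S i). apply inB_lowest; lia.
      * apply inT_iff_inB. exists i. apply inB_lowest; lia.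
      * unfold step. right; right. nia.
  - intros l f Hchain.
    pose proof (chainT_rank l f Hchain l (le_n l)).
    pose proof (inB_index_le _ _ (inT_rank (f l) (proj1 Hchain l (le_n l)))). lia.
Qed.

End Gaps.

Theorem theorem2p3 (s : nat) (hs : 3 <= s) :
  let L := s / 2 - 1 in
  (forall n, inT s n <-> exists k, k <= L /\ inB s k n) /\
  (exists rho : nat -> nat, graded_with_rank s rho /\
     (forall b k, inT s b -> (rho b = k <-> inB s k b))) /\
  has_length s L /\
  (forall k b, 1 <= k -> k <= L -> inB s k b ->
     (forall x, coversT s b x <-> (x = b - s \/ x = b - (s + 1) \/ x = b - (s + 2))) /\
     inB s (k - 1) (b - s) /\ inB s (k - 1) (b - (s + 1)) /\ inB s (k - 1) (b - (s + 2))) /\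
  (forall x, minimalT s x <-> inB s 0 x).
Proof.
  intros L. assert (s_pos : 0 < s) by lia.
  split; [| split; [| split; [| split]]].
  - intros n. rewrite (inT_iff_inB s s_pos).
    split; [intros [k Hk] | intros [k [_ Hk]]]; eauto using inB_index_le.
  - exists (fun b => b / s). split; [split |].
    + intros x Hx%(minimalT_iff_inB0 s s_pos). now apply inB_rank.
    + intros x y Hcov.
      pose proof (coversT_step s s_pos y x Hcov) as Hstep.
      destruct Hcov as [[Hyx%(geT_inT s) _] _].
      now apply step_rank.
    + intros b k Hb%(inT_rank s s_pos).
      split; [now intros <- | intros Hk; now apply inB_rank].
  - apply has_length_gaps; lia.
  - intros k b Hk _ Hb.
    split; [intros x; now apply (coversT_iff s s_pos k) |].
    repeat split; apply (inB_sub_step s s_pos k b); auto; lia.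
  - intros x. now apply minimalT_iff_inB0.
Qed.
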